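(* Let $\mathbb{K}$ be a field, $m\ge 3$, $R=\mathbb{K}[T_1,\dots,T_m]$, and let $I=\langle T_1^{a_1},\dots,T_m^{a_m},T_1^{b_1}\cdots T_m^{b_m}\rangle\subset R$, where $0\le b_i<a_i$ for all $i$ and $b_i\neq 0$ for at least two indices $i$. Let $L\subset S=R[X_1,\dots,X_m,W]$ be the defining ideal of the Rees algebra of $I$. Then the set $\Gamma_0\cup\Gamma_1$, where $$\Gamma_0=\{\mathcal{P}(X_i,X_j)\mid 1\le j<i\le m+1\},\qquad \Gamma_1=\{\mathcal{P}(W^{|\mathbf{c}|},\mathbf{X}^{\mathbf{c}})\mid \mathbf{0}\neq \mathbf{c}\in\mathbb{N}^m\},$$ is an (infinite) Gröbner basis of $L$ with respect to the monomial order $\tau$.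
   Context: Write $\mathbf{T}^{\mathbf{b}}=T_1^{b_1}\cdots T_m^{b_m}$. Let $\Phi:S\to R[Z]$ be the $R$-algebra homomorphism with $X_i\mapsto T_i^{a_i}Z$ ($1\le i\le m$) and $W\mapsto \mathbf{T}^{\mathbf{b}}Z$; its image is the Rees algebra $\mathcal{R}(I)=\bigoplus_{k\ge0}I^kZ^k$ and $L=\ker\Phi$. Set $X_{m+1}:=W$. For $\mathbf{c}\in\mathbb{N}^m$, $\mathbf{X}^{\mathbf{c}}=X_1^{c_1}\cdots X_m^{c_m}$ and $|\mathbf{c}|=\sum c_i$. Let $\Psi:S\to R$ be the $R$-algebra map with $X_i\mapsto T_i^{a_i}$, $W\mapsto\mathbf{T}^{\mathbf{b}}$. For monomials $M,N$ in $X_1,\dots,X_m,W$ (of the same degree), put $g=\gcd(\Psi(M),\Psi(N))$ and $\mathcal{P}(M,N):=\frac{\Psi(N)}{g}M-\frac{\Psi(M)}{g}N\in L$. The order $\tau$ is the lexicographic order on $S$ with $W>X_m>X_{m-1}>\cdots>X_1>T_1>\cdots>T_m$. *)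

From HB Require Import structures.
From mathcomp Require Import all_boot all_order all_algebra.
From mathcomp Require Import mpoly.
Set Implicit Arguments. Unset Strict Implicit. Unset Printing Implicit Defensive.
Import GRing.Theory.
Local Open Scope ring_scope.

(* Variables of S = K[T_1..T_m, X_1..X_m, W] are indexed by 'I_(nS m):
     T_{j+1} |-> j        (0 <= j < m)
     X_{j+1} |-> m + j    (0 <= j < m)
     W = X_{m+1} |-> m + m.
   Variables of R[Z] = K[T_1..T_m, Z] are indexed by 'I_(m.+1):
     T_{j+1} |-> j, Z |-> m. *)
Definition nS (m : nat) : nat := (m + m).+1.

Definition ext (m : nat) (a : 'I_m -> nat) (k : nat) : nat :=
  match @insub nat (fun k => k < m)%N _ k with Some i => a i | None => 0%N end.

Section Defs.
Variables (K : fieldType) (m : nat) (a b : 'I_m -> nat).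

Definition phi_img (k : nat) : {mpoly K[m.+1]} :=
  if (k < m)%N then 'X_(inord k)
  else if (k < m + m)%N then 'X_(inord (k - m)) ^+ ext a (k - m) * 'X_(inord m)
  else (\prod_(j < m) 'X_(inord j) ^+ b j) * 'X_(inord m).

Definition Phi (f : {mpoly K[nS m]}) : {mpoly K[m.+1]} :=
  comp_mpoly [tuple phi_img i | i < nS m] f.

Definition Lker (f : {mpoly K[nS m]}) : Prop := Phi f = 0.

(* Psi : S -> R, on monomials: T_j |-> T_j, X_j |-> T_j^{a_j}, W |-> T^b.
   The result is a monomial in the T-variables, viewed in 'X_{1..nS m}. *)
Definition psi_mon (mu : 'X_{1..nS m}) : 'X_{1..nS m} :=
  [multinom (if (i < m)%N then
               mu (inord i) + ext a i * mu (inord (m + i)) + ext b i * mu (inord (m + m))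
             else 0)%N | i < nS m].

Definition gcd_mon (u v : 'X_{1..nS m}) : 'X_{1..nS m} :=
  [multinom minn (u i) (v i) | i < nS m].

Definition Pbin (M N : 'X_{1..nS m}) : {mpoly K[nS m]} :=
  let g := gcd_mon (psi_mon M) (psi_mon N) in
  'X_[(psi_mon N - g)%MM] * 'X_[M] - 'X_[(psi_mon M - g)%MM] * 'X_[N].

(* monomial in X_1..X_{m+1} (X_{m+1} = W) with exponent e k on X_{k+1} *)
Definition xw_mon (e : nat -> nat) : 'X_{1..nS m} :=
  [multinom (if (m <= i)%N then e (i - m) else 0)%N | i < nS m].

Definition Xvar (i : nat) : 'X_{1..nS m} := xw_mon (fun k => (k == i.-1) : nat).
Definition Xpow (c : 'I_m -> nat) : 'X_{1..nS m} := xw_mon (ext c).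
Definition Wpow (d : nat) : 'X_{1..nS m} := xw_mon (fun k => ((k == m) : nat) * d)%N.

Definition Gamma0 (g : {mpoly K[nS m]}) : Prop :=
  exists i j : nat, [/\ (1 <= j)%N, (j < i)%N, (i <= m.+1)%N & g = Pbin (Xvar i) (Xvar j)].

Definition Gamma1 (g : {mpoly K[nS m]}) : Prop :=
  exists c : 'I_m -> nat, (exists i, c i != 0%N) /\
    g = Pbin (Wpow (\sum_(i < m) c i)%N) (Xpow c).

(* the order tau: lex with W > X_m > ... > X_1 > T_1 > ... > T_m *)
Definition tau_seq : seq nat :=
  (m + m)%N :: [seq ((m + m).-1 - j)%N | j <- iota 0 m] ++ iota 0 m.

Definition tau_lt (u v : 'X_{1..nS m}) : Prop :=
  exists k, [/\ (k < size tau_seq)%N,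
    (forall j, (j < k)%N -> u (inord (nth 0 tau_seq j)) = v (inord (nth 0 tau_seq j)))
    & (u (inord (nth 0 tau_seq k)) < v (inord (nth 0 tau_seq k)))%N].

End Defs.

Definition is_lead_mon (R : ringType) (n : nat) (lt : 'X_{1..n} -> 'X_{1..n} -> Prop)
  (p : {mpoly R[n]}) (mu : 'X_{1..n}) : Prop :=
  mu \in msupp p /\ forall nu, nu \in msupp p -> nu <> mu -> lt nu mu.

(* G is a (possibly infinite) Groebner basis of the ideal I w.r.t. lt:
   G is contained in I and in(I) is generated by the leading monomials of G,
   i.e. the leading monomial of every nonzero f in I is divisible by the
   leading monomial of some nonzero g in G. *)
Definition is_groebner (R : ringType) (n : nat) (lt : 'X_{1..n} -> 'X_{1..n} -> Prop)
  (G I : {mpoly R[n]} -> Prop) : Prop :=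
  (forall g, G g -> I g) /\
  (forall f, I f -> f <> 0 -> exists g mu nu,
     [/\ G g, g <> 0, is_lead_mon lt g nu, is_lead_mon lt f mu & (nu <= mu)%MM]).

From HB Require Import structures.
From mathcomp Require Import all_boot all_order all_algebra.
From mathcomp Require Import mpoly.
From mathcomp Require Import zify.
Set Implicit Arguments. Unset Strict Implicit. Unset Printing Implicit Defensive.
Import GRing.Theory.
Local Open Scope ring_scope.

(* The map Phi sends monomials to monomials, so if f lies in L = ker Phi, the
   tau-leading monomial mu of f must cancel in Phi(f) against another monomial
   nu < mu of f with the same image: Psi(nu) = Psi(mu), and nu, mu have the same
   total degree in X_1, ..., X_m, W.  Compare nu and mu at the first variable
   where they differ in the order tau.  If it is W, then mu has d > 0 more W's
   than nu, so nu has d more X's than mu; choosing X^c among them, the leading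
   monomial (Psi(X^c)/g) W^d of P(W^d, X^c) divides mu, because Psi(nu) = Psi(mu)
   makes the T-part of mu large enough.  If it is X_l, then nu has more X_j than
   mu for some j < l, which via Psi(nu) = Psi(mu) forces T_j^{a_j} | mu, so the
   leading monomial T_j^{a_j} X_l of P(X_l, X_j) divides mu.  It cannot be a
   T-variable, since Psi and the X-exponents determine the T-exponents.
   The argument uses none of the hypotheses on m, a and b. *)

Lemma sum_nat_pick n (F : nat -> nat) j : (j < n)%N ->
  (\sum_(i < n) ((i == j :> nat) * F i))%N = F j.
Proof.
move=> lt_jn; rewrite (bigD1 (Ordinal lt_jn)) //= eqxx mul1n big1 ?addn0 // => i neq_i.
by case: eqP => [eq_ij|]; rewrite ?mul0n //; case/eqP: neq_i; apply: val_inj.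
Qed.

Lemma exists_leq_sum_eq n (F : 'I_n -> nat) d : (d <= \sum_(i < n) F i)%N ->
  exists2 c : 'I_n -> nat, (forall i, c i <= F i)%N & (\sum_(i < n) c i)%N = d.
Proof.
elim: d => [|d IH] le_dF; first by exists (fun=> 0%N); rewrite ?big1.
have [c le_cF sum_c] := IH (ltnW le_dF).
have [i lt_ci] : exists i, (c i < F i)%N.
  apply/existsP; apply: contraTT le_dF; rewrite negb_exists -leqNgt => /forallP le_Fc.
  by rewrite -sum_c; apply: leq_sum => i _; rewrite leqNgt le_Fc.
exists (fun j => c j + (j == i))%N => [j|].
  by case: eqVneq => [->|_]; rewrite ?addn1 ?addn0.
by rewrite big_split /= sum_c (bigD1 i) //= eqxx big1 => [|j /negbTE->]; rewrite ?addn0 ?addn1.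
Qed.

Lemma ltn_sum_ord n (F G : 'I_n -> nat) i0 :
  (forall i, F i <= G i)%N -> (F i0 < G i0)%N -> (\sum_(i < n) F i < \sum_(i < n) G i)%N.
Proof.
move=> le_FG lt_FG0; rewrite (bigD1 i0) // [X in (_ < X)%N](bigD1 i0) //=.
by rewrite -addSn leq_add // leq_sum.
Qed.

Section LexOrder.
Variable n : nat.

Definition lexlt (F G : nat -> nat) : Prop :=
  exists k, [/\ (k < n)%N, (forall j, (j < k)%N -> F j = G j) & (F k < G k)%N].

Lemma lexlt_irr F : ~ lexlt F F.
Proof. by case=> k [_ _]; rewrite ltnn. Qed.

Lemma lexlt_trans F G H : lexlt F G -> lexlt G H -> lexlt F H.
Proof.
move=> [k1 [lt_k1 eq1 lt1]] [k2 [lt_k2 eq2 lt2]].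
case: (ltngtP k1 k2) => k12; last (subst k2; exists k1; split=> // [j ltj|]).
- exists k1; split=> // [j ltj|]; first by rewrite eq1 ?eq2 //; lia.
  by rewrite -(eq2 k1 k12).
- exists k2; split=> // [j ltj|]; first by rewrite eq1 ?eq2 //; lia.
  by rewrite (eq1 k2 k12).
- by rewrite eq1 ?eq2.
- exact: ltn_trans lt2.
Qed.

End LexOrder.

Lemma lexlt_total n F G :
  (forall k, (k < n)%N -> F k = G k) \/ lexlt n F G \/ lexlt n G F.
Proof.
elim: n => [|n IH]; first by left.
case: IH => [eqFG|[[k [ltk eqk ltFG]]|[k [ltk eqk ltGF]]]]; last 2 first.
- by right; left; exists k; split=> //; lia.
- by right; right; exists k; split=> //; lia.
case: (ltngtP (F n) (G n)) => cmp.
- by right; left; exists n.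
- by right; right; exists n; split=> // j /eqFG.
- by left=> k; rewrite ltnS leq_eqVlt => /orP[/eqP->|/eqFG].
Qed.

Section LeadingMonomial.
Variables (R : nzRingType) (n : nat) (lt : 'X_{1..n} -> 'X_{1..n} -> Prop).

Lemma lead_mon_exists (p : {mpoly R[n]}) :
  (forall u v w, lt u v -> lt v w -> lt u w) ->
  (forall u v, u <> v -> lt u v \/ lt v u) ->
  p != 0 -> exists mu, is_lead_mon lt p mu.
Proof.
move=> lt_trans lt_total; rewrite -msupp_eq0 /is_lead_mon.
elim: (msupp p) => [//|u s IH] _.
case: (eqVneq s [::]) => [->|/IH [v [v_s v_max]]].
  by exists u; split=> [|w]; rewrite ?mem_seq1 // => /eqP.
have [->|neq_uv] := eqVneq u v.
  by exists v; split=> [|w]; rewrite ?inE ?eqxx // => /orP[/eqP->//|/v_max].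
case: (lt_total u v (elimN eqP neq_uv)) => [lt_uv|lt_vu].
  exists v; split=> [|w]; first by rewrite inE v_s orbT.
  by rewrite inE => /orP[/eqP->|/v_max].
exists u; split=> [|w]; first by rewrite inE eqxx.
rewrite inE => /orP[/eqP->//|w_s] neq_wu.
have [->//|/eqP neq_wv] := eqVneq w v.
exact: lt_trans (v_max w w_s neq_wv) lt_vu.
Qed.

Lemma lead_mon_binomial (u v : 'X_{1..n}) :
  (forall w, ~ lt w w) -> lt v u ->
  'X_[u] - 'X_[v] <> 0 :> {mpoly R[n]} /\ is_lead_mon lt ('X_[u] - 'X_[v] : {mpoly R[n]}) u.
Proof.
move=> lt_irr lt_vu; have neq_vu : (v == u) = false.
  by apply/eqP=> eq_vu; apply: (lt_irr u); rewrite -{1}eq_vu.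
have coefE w : ('X_[u] - 'X_[v] : {mpoly R[n]})@_w = (u == w)%:R - (v == w)%:R.
  by rewrite mcoeffB !mcoeffX.
have u_supp : u \in msupp ('X_[u] - 'X_[v] : {mpoly R[n]}).
  by rewrite mcoeff_msupp coefE eqxx neq_vu subr0 oner_neq0.
split; first by move=> eq0; rewrite eq0 msupp0 in u_supp.
split=> // w; rewrite mcoeff_msupp coefE => nz_w /eqP; rewrite eq_sym => /negbTE neq_uw.
have [<-//|/negbTE neq_vw] := eqVneq v w.
by move: nz_w; rewrite neq_uw neq_vw subrr eqxx.
Qed.

End LeadingMonomial.

Section MonomialSubstitution.
Variables (R : comNzRingType) (n k : nat) (img : 'I_n -> 'X_{1..k}).

Definition mon_subst (u : 'X_{1..n}) : 'X_{1..k} := (\sum_(i < n) img i *+ u i)%MM.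

Lemma comp_mpoly_monX (u : 'X_{1..n}) :
  'X_[u] \mPo [tuple 'X_[img i] | i < n] = 'X_[mon_subst u] :> {mpoly R[k]}.
Proof.
by rewrite comp_mpolyX /mon_subst -mprodXnE; apply: eq_bigr => i _; rewrite tnth_mktuple.
Qed.

Lemma comp_mpoly_mon_eq0 (p : {mpoly R[n]}) mu :
  p \mPo [tuple 'X_[img i] | i < n] = 0 -> mu \in msupp p ->
  exists2 nu, nu \in msupp p & nu != mu /\ mon_subst nu = mon_subst mu.
Proof.
move=> p_eq0 mu_p.
case: (boolP (has (fun nu => (nu != mu) && (mon_subst nu == mon_subst mu)) (msupp p))).
  by case/hasP=> nu nu_p /andP[neq /eqP eq_img]; exists nu.
move=> no_partner; have coef_mu : (p \mPo [tuple 'X_[img i] | i < n])@_(mon_subst mu) = p@_mu.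
  rewrite comp_mpolyEX raddf_sum /= (bigD1_seq mu) //= ?msupp_uniq //.
  rewrite mcoeffZ comp_mpoly_monX mcoeffX eqxx mulr1 big1_seq ?addr0 //.
  move=> nu /andP[neq nu_p]; rewrite mcoeffZ comp_mpoly_monX mcoeffX.
  case: eqP => [eq_img|]; last by rewrite mulr0.
  by case/negP: no_partner; apply/hasP; exists nu; rewrite // neq eq_img eqxx.
by move: mu_p; rewrite mcoeff_msupp -coef_mu p_eq0 mcoeff0 eqxx.
Qed.

End MonomialSubstitution.

Section Tau.
Variable m : nat.
Implicit Types u v : 'X_{1..nS m}.

(* [xexp u l] is the exponent of X_{l+1} in u, so [xexp u m] is that of W. *)
Definition texp u (j : nat) : nat := u (inord j).
Definition xexp u (l : nat) : nat := u (inord (m + l)).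

Definition tau_key u (k : nat) : nat := u (inord (nth 0%N (tau_seq m) k)).

Lemma size_tau_seq : size (tau_seq m) = nS m.
Proof. by rewrite /= size_cat size_map !size_iota. Qed.

Lemma tau_ltE u v : tau_lt u v <-> lexlt (nS m) (tau_key u) (tau_key v).
Proof. by rewrite /tau_lt size_tau_seq. Qed.

Lemma tau_key_xexp u k : (k <= m)%N -> tau_key u k = xexp u (m - k).
Proof.
rewrite /tau_key /xexp; case: k => [|k] le_km /=; first by rewrite subn0.
rewrite nth_cat size_map size_iota le_km (nth_map 0%N) ?size_iota // nth_iota //.
by congr (u (inord _)); lia.
Qed.

Lemma tau_key_texp u t : (t < m)%N -> tau_key u (m.+1 + t) = texp u t.
Proof.
move=> lt_tm; rewrite /tau_key addSn /= nth_cat size_map size_iota.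
by rewrite ltnNge leq_addr addKn nth_iota.
Qed.

Lemma mem_tau_seq i : (i < nS m)%N -> i \in tau_seq m.
Proof.
rewrite /nS inE mem_cat mem_iota add0n /= => lt_i.
case: (ltnP i m) => [_|le_mi]; first by rewrite !orbT.
have [//|neq] := eqVneq i (m + m)%N.
apply/orP; right; apply/orP; left; apply/mapP; exists ((m + m).-1 - i)%N; last by lia.
by rewrite mem_iota; lia.
Qed.

Lemma tau_key_inj u v : (forall k, (k < nS m)%N -> tau_key u k = tau_key v k) -> u = v.
Proof.
move=> eq_key; apply/mnmP => i; rewrite -(inord_val i).
have i_tau := mem_tau_seq (ltn_ord i).
have lt_idx : (index (val i) (tau_seq m) < nS m)%N.
  by move: i_tau; rewrite -index_mem size_tau_seq.
by have := eq_key _ lt_idx; rewrite /tau_key nth_index.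
Qed.

Lemma tau_irr u : ~ tau_lt u u.
Proof. by rewrite tau_ltE; apply: lexlt_irr. Qed.

Lemma tau_trans u v w : tau_lt u v -> tau_lt v w -> tau_lt u w.
Proof. by rewrite !tau_ltE; apply: lexlt_trans. Qed.

Lemma tau_total u v : u <> v -> tau_lt u v \/ tau_lt v u.
Proof.
move=> neq_uv; rewrite !tau_ltE.
by case: (lexlt_total (nS m) (tau_key u) (tau_key v)) => // /tau_key_inj.
Qed.

Lemma tau_lt_xexp u v l : (l <= m)%N ->
  (forall l', (l < l' <= m)%N -> xexp u l' = xexp v l') ->
  (xexp u l < xexp v l)%N -> tau_lt u v.
Proof.
move=> le_lm eq_above lt_l; rewrite tau_ltE; exists (m - l)%N; split.
- by rewrite /nS; lia.
- by move=> j lt_j; rewrite !tau_key_xexp ?eq_above //; lia.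
- by rewrite !tau_key_xexp ?leq_subr // subKn.
Qed.

Lemma tau_lt_cases u v : tau_lt u v ->
  (exists l, [/\ (l <= m)%N, (forall l', (l < l' <= m)%N -> xexp u l' = xexp v l')
                 & (xexp u l < xexp v l)%N])
  \/ ((forall l, (l <= m)%N -> xexp u l = xexp v l) /\
      exists2 t, (t < m)%N & (texp u t < texp v t)%N).
Proof.
rewrite tau_ltE => -[k [lt_k eq_below lt_at]].
case: (leqP k m) => [le_km|lt_mk].
  left; exists (m - k)%N; split=> [|l' /andP[lt_l' le_l']|]; first exact: leq_subr.
    have := eq_below (m - l')%N; rewrite !tau_key_xexp ?leq_subr ?subKn //.
    by apply; lia.
  by rewrite -!tau_key_xexp.
right; split=> [l le_lm|].
  by have := eq_below (m - l)%N; rewrite !tau_key_xexp ?leq_subr ?subKn //; apply; lia.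
have lt_tm : (k - m.+1 < m)%N by rewrite /nS in lt_k; lia.
by exists (k - m.+1)%N; rewrite // -!tau_key_texp // subnKC.
Qed.

End Tau.

Section Rees.
Variables (K : fieldType) (m : nat) (a b : 'I_m -> nat).
Implicit Types u v M N : 'X_{1..nS m}.
Local Notation psi := (psi_mon a b).

Definition xdeg u : nat := (\sum_(l < m) xexp u l + xexp u m)%N.

Lemma ext_ord (f : 'I_m -> nat) (i : 'I_m) : ext f i = f i.
Proof. by rewrite /ext valK. Qed.

Lemma ext_ge (f : 'I_m -> nat) k : (m <= k)%N -> ext f k = 0%N.
Proof. by move=> le_mk; rewrite /ext insubF // ltnNge le_mk. Qed.

Lemma psi_monE u (j : 'I_m) :
  psi u (inord j) = (texp u j + a j * xexp u j + b j * xexp u m)%N.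
Proof.
have lt_j : (j < nS m)%N by rewrite /nS; have := ltn_ord j; lia.
by rewrite /psi_mon mnmE inordK // ltn_ord !ext_ord.
Qed.

Lemma psi_mon_ge u (i : 'I_(nS m)) : (m <= i)%N -> psi u i = 0%N.
Proof. by move=> le_mi; rewrite /psi_mon mnmE ltnNge le_mi. Qed.

Lemma xexp_psi u l : (l <= m)%N -> xexp (psi u) l = 0%N.
Proof. by move=> le_lm; rewrite /xexp psi_mon_ge // inordK ?leq_addr //; rewrite /nS; lia. Qed.

Lemma psi_monD u v : psi (u + v)%MM = (psi u + psi v)%MM.
Proof.
apply/mnmP => i; rewrite mnmDE /psi_mon !mnmE.
by case: ifP => // _; rewrite !mulnDr; lia.
Qed.

Lemma psi_mon_id u : (forall l, (l <= m)%N -> xexp u l = 0%N) -> psi u = u.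
Proof.
move=> xexp0; apply/mnmP => i; rewrite /psi_mon mnmE.
case: (ltnP i m) => [lt_im|le_mi].
  rewrite /xexp in xexp0; rewrite inord_val !xexp0 ?(ltnW lt_im) //.
  by rewrite !muln0 !addn0.
have := xexp0 (i - m)%N; rewrite /xexp subnKC // inord_val => -> //.
by have := ltn_ord i; rewrite /nS; lia.
Qed.

Lemma xdeg_eq u v : (forall l, (l <= m)%N -> xexp u l = xexp v l) -> xdeg u = xdeg v.
Proof.
move=> eq_uv; rewrite /xdeg eq_uv //; congr (_ + _)%N.
by apply: eq_bigr => l _; rewrite eq_uv // ltnW.
Qed.

Lemma xexp_psiB u v l : (l <= m)%N -> xexp (psi u - v)%MM l = 0%N.
Proof. by move=> le_lm; rewrite /xexp mnmBE -/(xexp _ l) xexp_psi. Qed.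

Lemma xexp_psiB_add u v w l : (l <= m)%N -> xexp (psi u - v + w)%MM l = xexp w l.
Proof. by move=> le_lm; rewrite {1}/xexp mnmDE -/(xexp (psi u - v)%MM l) xexp_psiB. Qed.

Definition Pbin_left M N := (psi N - gcd_mon (psi M) (psi N) + M)%MM.
Definition Pbin_right M N := (psi M - gcd_mon (psi M) (psi N) + N)%MM.

Lemma PbinE M N : Pbin K a b M N = 'X_[Pbin_left M N] - 'X_[Pbin_right M N].
Proof. by rewrite /Pbin !mpolyXD. Qed.

Lemma texp_Pbin_left M N (j : 'I_m) : texp (Pbin_left M N) j =
  (psi N (inord j) - minn (psi M (inord j)) (psi N (inord j)) + texp M j)%N.
Proof. by rewrite /texp /Pbin_left /gcd_mon mnmDE mnmBE mnmE. Qed.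

Lemma psi_Pbin_left_right M N : psi (Pbin_left M N) = psi (Pbin_right M N).
Proof.
have gcd_le u v : (gcd_mon u v <= u)%MM /\ (gcd_mon u v <= v)%MM.
  by split; apply/mnm_lepP => i; rewrite mnmE ?geq_minl ?geq_minr.
have [le_gM le_gN] := gcd_le (psi M) (psi N).
rewrite /Pbin_left /Pbin_right !psi_monD !(psi_mon_id (xexp_psiB _ _)).
by rewrite addmC addmBA // [RHS]addmC addmBA // addmC.
Qed.

Definition rees_mon (k : nat) : 'X_{1..m.+1} :=
  if (k < m)%N then U_(inord k)%MM
  else if (k < m + m)%N then (U_(inord (k - m)) *+ ext a (k - m) + U_(inord m))%MM
  else (\big[+%MM/0%MM]_(j < m) (U_(inord j) *+ b j) + U_(inord m))%MM.

Lemma PhiE (f : {mpoly K[nS m]}) : Phi a b f = f \mPo [tuple 'X_[rees_mon i] | i < nS m].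
Proof.
congr comp_mpoly; apply: eq_mktuple => i; rewrite /phi_img /rees_mon.
case: ifP => // _; case: ifP => _; first by rewrite mpolyXD mpolyXn.
by rewrite mpolyXD -mprodXnE.
Qed.

Lemma rees_monE k j : (j <= m)%N -> rees_mon k (inord j) =
  if (k < m)%N then (k == j : nat)
  else if (k < m + m)%N then ((k - m == j) * ext a (k - m) + (m == j))%N
  else (ext b j + (m == j))%N.
Proof.
move=> le_jm; have inj_inord i : (i <= m)%N -> (inord i == inord j :> 'I_m.+1) = (i == j).
  by move=> le_im; apply/eqP/eqP => [eq_ij|->//]; rewrite -(inordK le_im) -(inordK le_jm) eq_ij.
rewrite /rees_mon; case: ifP => lt_km; first by rewrite mnm1E inj_inord // ltnW.
case: ifP => lt_kmm; first by rewrite mnmDE mulmnE !mnm1E !inj_inord //; lia.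
rewrite mnmDE mnm1E inj_inord // mnm_sumE eq_sym; congr (_ + _)%N.
under eq_bigr => l _ do rewrite mulmnE mnm1E (inj_inord _ (ltnW (ltn_ord l))) -(ext_ord b).
have [lt_jm|] := ltnP j m; first by rewrite sum_nat_pick.
by move=> le_mj; rewrite ext_ge // big1 // => l _; rewrite (ltn_eqF (leq_trans (ltn_ord l) le_mj)).
Qed.

Lemma sum_ord_nS (G : nat -> nat) :
  (\sum_(i < nS m) G i = \sum_(i < m) G i + \sum_(l < m) G (m + l) + G (m + m))%N.
Proof. by rewrite /nS big_ord_recr big_split_ord. Qed.

Lemma mon_subst_reesE u j : (j <= m)%N -> mon_subst rees_mon u (inord j) =
  (\sum_(i < m) (i == j :> nat) * texp u i
   + \sum_(l < m) ((l == j :> nat) * ext a l + (m == j)) * xexp u l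
   + (ext b j + (m == j)) * xexp u m)%N.
Proof.
move=> le_jm; rewrite /mon_subst mnm_sumE.
rewrite (eq_bigr (fun i : 'I_(nS m) => rees_mon i (inord j) * u (inord i))%N); last first.
  by move=> i _; rewrite mulmnE inord_val.
rewrite (sum_ord_nS (fun k => rees_mon k (inord j) * u (inord k))%N).
rewrite rees_monE // ltnNge leq_addr ltnn /=; congr (_ + _ + _)%N.
  by apply: eq_bigr => i _; rewrite rees_monE // ltn_ord.
apply: eq_bigr => l _.
by rewrite rees_monE // ltnNge leq_addr ltn_add2l ltn_ord addKn.
Qed.

Lemma mon_subst_rees_psi u (j : 'I_m) : mon_subst rees_mon u (inord j) = psi u (inord j).
Proof.
have lt_jm := ltn_ord j.
rewrite mon_subst_reesE ?(ltnW lt_jm) // psi_monE (sum_nat_pick (texp u) lt_jm).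
rewrite (gtn_eqF lt_jm) addn0; under eq_bigr => l _ do rewrite addn0 -mulnA.
by rewrite (sum_nat_pick (fun l => ext a l * xexp u l)%N lt_jm) !ext_ord.
Qed.

Lemma mon_subst_rees_xdeg u : mon_subst rees_mon u (inord m) = xdeg u.
Proof.
rewrite mon_subst_reesE // big1 => [|i _]; last by rewrite ltn_eqF.
under eq_bigr => l _ do rewrite ltn_eqF // eqxx mul0n add0n mul1n.
by rewrite ext_ge // eqxx add0n mul1n.
Qed.

Lemma mon_subst_rees_eq u v :
  mon_subst rees_mon u = mon_subst rees_mon v <-> psi u = psi v /\ xdeg u = xdeg v.
Proof.
split=> [eq_uv|[eq_psi eq_xdeg]].
  split; last by rewrite -!mon_subst_rees_xdeg eq_uv.
  apply/mnmP => i; case: (ltnP i m) => [lt_im|le_mi]; last by rewrite !psi_mon_ge.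
  by rewrite -(inord_val i) -!(mon_subst_rees_psi _ (Ordinal lt_im)) eq_uv.
apply/mnmP => j; rewrite -(inord_val j); case: (ltnP j m) => [lt_jm|le_mj].
  by rewrite !(mon_subst_rees_psi _ (Ordinal lt_jm)) eq_psi.
have -> : nat_of_ord j = m by have := ltn_ord j; lia.
by rewrite !mon_subst_rees_xdeg.
Qed.

Lemma Pbin_in_L M N : xdeg M = xdeg N -> Lker a b (Pbin K a b M N).
Proof.
move=> eq_deg; rewrite /Lker PhiE PbinE comp_mpolyB !comp_mpoly_monX.
suff -> : mon_subst rees_mon (Pbin_left M N) = mon_subst rees_mon (Pbin_right M N).
  by rewrite subrr.
apply/mon_subst_rees_eq; split; first exact: psi_Pbin_left_right.
by rewrite (xdeg_eq (xexp_psiB_add _ _ _)) [RHS](xdeg_eq (xexp_psiB_add _ _ _)).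
Qed.

Lemma Pbin_lead M N : tau_lt (Pbin_right M N) (Pbin_left M N) ->
  Pbin K a b M N <> 0 /\ is_lead_mon (@tau_lt m) (Pbin K a b M N) (Pbin_left M N).
Proof. by rewrite PbinE; apply: lead_mon_binomial; apply: tau_irr. Qed.

Lemma lep_texp_xexp u v :
  (forall j : 'I_m, texp u j <= texp v j)%N ->
  (forall l, l <= m -> xexp u l <= xexp v l)%N -> (u <= v)%MM.
Proof.
move=> le_t le_x; apply/mnm_lepP => i; rewrite -(inord_val i).
case: (ltnP i m) => [lt_im|le_mi]; first exact: (le_t (Ordinal lt_im)).
have := le_x (i - m)%N; rewrite /xexp subnKC //; apply.
by have := ltn_ord i; rewrite /nS; lia.
Qed.

Lemma texp_xw e (j : 'I_m) : texp (xw_mon m e) j = 0%N.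
Proof.
have lt_j : (j < nS m)%N by rewrite /nS; have := ltn_ord j; lia.
by rewrite /texp /xw_mon mnmE inordK // leqNgt ltn_ord.
Qed.

Lemma xexp_xw e l : (l <= m)%N -> xexp (xw_mon m e) l = e l.
Proof.
move=> le_lm; have lt_l : (m + l < nS m)%N by rewrite /nS; lia.
by rewrite /xexp /xw_mon mnmE inordK // leq_addr addKn.
Qed.

Lemma psi_xw e (j : 'I_m) : psi (xw_mon m e) (inord j) = (a j * e j + b j * e m)%N.
Proof. by rewrite psi_monE texp_xw !xexp_xw // ltnW. Qed.

Lemma xdeg_xw e : xdeg (xw_mon m e) = (\sum_(l < m) e l + e m)%N.
Proof.
rewrite /xdeg xexp_xw //; congr (_ + _)%N.
by apply: eq_bigr => l _; rewrite xexp_xw // ltnW.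
Qed.

Lemma Gamma_subset_L (g : {mpoly K[nS m]}) : Gamma0 a b g \/ Gamma1 a b g -> Lker a b g.
Proof.
case=> [[i [j [le1j lt_ji le_im ->]]]|[c [_ ->]]]; apply: Pbin_in_L.
  have xdeg_Xvar k : (1 <= k <= m.+1)%N -> xdeg (Xvar m k) = 1%N.
    move=> /andP[le1k le_km]; rewrite xdeg_xw.
    have [lt_km|le_mk] := ltnP k.-1 m.
      under eq_bigr => l _ do rewrite -[nat_of_bool _]muln1.
      by rewrite (sum_nat_pick (fun=> 1%N) lt_km) (gtn_eqF lt_km).
    rewrite big1 => [|l _]; last by rewrite ltn_eqF // (leq_trans (ltn_ord l)).
    have -> : k.-1 = m by lia.
    by rewrite eqxx.
  by rewrite !xdeg_Xvar //; lia.
rewrite !xdeg_xw eqxx ext_ge // big1 => [|l _]; last by rewrite ltn_eqF.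
rewrite add0n mul1n addn0; by apply: eq_bigr => l _; rewrite ext_ord.
Qed.

Definition in_initial_ideal (G : {mpoly K[nS m]} -> Prop) (mu : 'X_{1..nS m}) : Prop :=
  exists g nu, [/\ G g, g <> 0, is_lead_mon (@tau_lt m) g nu & (nu <= mu)%MM].

Lemma in_initial_ideal_sub (G G' : {mpoly K[nS m]} -> Prop) mu :
  (forall g, G g -> G' g) -> in_initial_ideal G mu -> in_initial_ideal G' mu.
Proof. by move=> sub_GG' [g [nu [/sub_GG' G'g nz lead dvd]]]; exists g, nu. Qed.

Lemma in_initial_Gamma1 nu mu : psi nu = psi mu -> xdeg nu = xdeg mu ->
  (xexp nu m < xexp mu m)%N -> in_initial_ideal (Gamma1 a b) mu.
Proof.
move=> eq_psi eq_deg lt_W; set d := (xexp mu m - xexp nu m)%N.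
have le_d : (d <= \sum_(l < m) (xexp nu l - xexp mu l))%N.
  have : (\sum_(l < m) xexp nu l
          <= \sum_(l < m) xexp mu l + \sum_(l < m) (xexp nu l - xexp mu l))%N.
    by rewrite -big_split; apply: leq_sum => l _ /=; lia.
  by move: eq_deg; rewrite /xdeg; lia.
have [c le_c sum_c] := exists_leq_sum_eq le_d.
pose M := Wpow m d; pose N := Xpow c.
have xexp_M l : (l <= m)%N -> xexp M l = ((l == m) * d)%N by move=> le_lm; rewrite xexp_xw.
have lt_RL : tau_lt (Pbin_right M N) (Pbin_left M N).
  apply: (@tau_lt_xexp _ _ _ m) => // [l|]; first lia.
  by rewrite !xexp_psiB_add // xexp_M // xexp_xw // ext_ge // eqxx; lia.
have [nz_P lead_P] := Pbin_lead lt_RL.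
exists (Pbin K a b M N), (Pbin_left M N); split=> //.
  exists c; split; last by rewrite sum_c.
  apply/existsP; apply: contraTT lt_W; rewrite negb_exists => /forallP c0.
  have : d = 0%N by rewrite -sum_c big1 // => i _; apply/eqP; rewrite -[_ == _]negbK c0.
  by rewrite -leqNgt; lia.
apply: lep_texp_xexp => [j|l le_lm]; last first.
  by rewrite xexp_psiB_add // xexp_M //; case: eqP => [->|]; rewrite ?mul0n // mul1n leq_subr.
rewrite texp_Pbin_left texp_xw addn0 !psi_xw !ext_ord !ext_ge // eqxx.
have := congr1 (fun w : 'X_{1..nS m} => w (inord j)) eq_psi; rewrite /= !psi_monE.
have := leq_mul (leqnn (a j)) (le_c j); rewrite mulnBr.
have := mulnBr (b j) (xexp mu m) (xexp nu m).
rewrite (ltn_eqF (ltn_ord j)) /d; lia.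
Qed.

Lemma in_initial_Gamma0 nu mu l : (l < m)%N -> psi nu = psi mu -> xdeg nu = xdeg mu ->
  (forall l', (l < l' <= m)%N -> xexp nu l' = xexp mu l') ->
  (xexp nu l < xexp mu l)%N -> in_initial_ideal (Gamma0 a b) mu.
Proof.
move=> lt_lm eq_psi eq_deg eq_above lt_l.
have [j lt_jl lt_j] : exists2 j : 'I_m, (j < l)%N & (xexp mu j < xexp nu j)%N.
  case: (boolP [exists j : 'I_m, (j < l)%N && (xexp mu j < xexp nu j)%N]).
    by case/existsP => j /andP[]; exists j.
  rewrite negb_exists => /forallP no_j.
  suff : (\sum_(i < m) xexp nu i < \sum_(i < m) xexp mu i)%N.
    by move: eq_deg; rewrite /xdeg (eq_above m) ?lt_lm ?leqnn //; lia.
  apply: (@ltn_sum_ord _ _ _ (Ordinal lt_lm)) => // i.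
  case: (ltngtP i l) => [lt_il|lt_li|->]; last exact: ltnW.
    by have := no_j i; rewrite lt_il /= -leqNgt.
  by rewrite eq_above // lt_li (ltnW (ltn_ord i)).
pose M := Xvar m l.+1; pose N := Xvar m j.+1.
have xexp_Xvar k l' : (l' <= m)%N -> xexp (Xvar m k.+1) l' = (l' == k).
  by move=> le_l'm; rewrite xexp_xw.
have lt_RL : tau_lt (Pbin_right M N) (Pbin_left M N).
  apply: (@tau_lt_xexp _ _ _ l) => [|l' /andP[lt_l' le_l'm]|]; first exact: ltnW.
    by rewrite !xexp_psiB_add // !xexp_Xvar // !gtn_eqF // (ltn_trans lt_jl).
  by rewrite !xexp_psiB_add ?xexp_Xvar ?(ltnW lt_lm) // eqxx (gtn_eqF lt_jl).
have [nz_P lead_P] := Pbin_lead lt_RL.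
exists (Pbin K a b M N), (Pbin_left M N); split=> //.
  by exists l.+1, j.+1; split=> //; lia.
apply: lep_texp_xexp => [t|l' le_l'm]; last first.
  rewrite xexp_psiB_add // xexp_Xvar //; case: eqP => [->|]; last by [].
  exact: leq_ltn_trans lt_l.
rewrite texp_Pbin_left texp_xw addn0 !psi_xw /= (gtn_eqF (ltn_ord j)) muln0 addn0.
apply: leq_trans (leq_subr _ _) _.
have [/val_inj ->|_] := eqVneq (val t) (val j); last by rewrite muln0.
have := congr1 (fun w : 'X_{1..nS m} => w (inord j)) eq_psi; rewrite /= !psi_monE.
rewrite (eq_above m) ?lt_lm ?leqnn // muln1.
have := leq_mul (leqnn (a j)) lt_j; rewrite mulnS; lia.
Qed.

Lemma in_initial_partner nu mu : tau_lt nu mu -> psi nu = psi mu -> xdeg nu = xdeg mu ->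
  in_initial_ideal (fun g => Gamma0 a b g \/ Gamma1 a b g) mu.
Proof.
move=> lt_nu_mu eq_psi eq_deg.
case: (tau_lt_cases lt_nu_mu) => [[l [le_lm eq_above lt_l]]|[eq_x [t lt_tm lt_t]]].
  have [lt_lm|le_ml] := ltnP l m.
    by apply: in_initial_ideal_sub (in_initial_Gamma0 lt_lm eq_psi eq_deg eq_above lt_l); left.
  have eq_lm : l = m by apply/eqP; rewrite eqn_leq le_lm.
  rewrite eq_lm in lt_l.
  by apply: in_initial_ideal_sub (in_initial_Gamma1 eq_psi eq_deg lt_l); right.
have := congr1 (fun w : 'X_{1..nS m} => w (inord t)) eq_psi.
by rewrite /= !(psi_monE _ (Ordinal lt_tm)) /= (eq_x t (ltnW lt_tm)) (eq_x m (leqnn m)); lia.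
Qed.

End Rees.

Theorem proposition2p1 (K : fieldType) (m : nat) (a b : 'I_m -> nat) :
  (3 <= m)%N ->
  (forall i, (b i < a i)%N) ->
  (exists i j : 'I_m, [/\ i != j, b i != 0%N & b j != 0%N]) ->
  is_groebner (@tau_lt m)
    (fun g => Gamma0 (K := K) a b g \/ Gamma1 (K := K) a b g)
    (Lker (K := K) a b).
Proof.
move=> _ _ _; split=> [|f]; first exact: Gamma_subset_L.
rewrite /Lker PhiE => f_L /eqP nz_f.
have [mu [mu_f mu_max]] := lead_mon_exists (@tau_trans m) (@tau_total m) nz_f.
have [nu nu_f [/eqP neq_nu_mu eq_img]] := comp_mpoly_mon_eq0 f_L mu_f.
have [eq_psi eq_deg] := (mon_subst_rees_eq a b nu mu).1 eq_img.
have [g [nu' [G_g nz_g lead_g dvd]]] :=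
  in_initial_partner K (mu_max nu nu_f neq_nu_mu) eq_psi eq_deg.
by exists g, mu, nu'.
Qed.
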